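(* Let $M$ be a graded $R$-module. If the map $\psi^q$ is surjective, then the quasi-compact open subsets of $qp.Spec_g(M)$ (with the quasi-Zariski topology) are closed under finite intersection and form an open base.
   Context: $R=\bigoplus_{g\in G}R_g$ is a graded commutative ring with identity graded by a group $G$, $h(R)=\bigcup_g R_g$; $M$ is a graded $R$-module, $h(M)$ its homogeneous elements. $Gr(I)$ is the graded radical of a graded ideal $I$. $(K:_RM)=\{r: rM\subseteq K\}$. Graded prime submodule: proper graded $P$ with $rm\in P$ ($r\in h(R), m\in h(M)$) implying $m\in P$ or $r\in(P:_RM)$. $Gr_M(K)$: intersection of graded prime submodules containing $K$ ($M$ if none). Graded primeful property of $K$: for each graded prime $p\supseteq(K:_RM)$ there is a graded prime submodule $P\supseteq K$ with $(P:_RM)=p$. Graded quasi-primary submodule: proper graded $Q$ with $rm\in Q$ ($r\in h(R),m\in h(M)$) implying $r\in Gr((Q:_RM))$ or $m\in Gr_M(Q)$. $qp.Spec_g(M)$: graded quasi-primary submodules with the graded primeful property. $qp\text{-}V_M^g(K)=\{Q\in qp.Spec_g(M): Gr((Q:_RM))\supseteq Gr((K:_RM))\}$; the quasi-Zariski topology has closed sets exactly these. $\overline R=R/\mathrm{Ann}(M)$. A graded quasi-primary ideal of $\overline R$ is a proper graded ideal $q$ with $ab\in q$ ($a,b$ homogeneous) implying $a\in Gr(q)$ or $b\in Gr(q)$; $qp.Spec_g(\overline R)$ is the set of them. $\psi^q:qp.Spec_g(M)\to qp.Spec_g(\overline R)$ is $\psi^q(Q)=(Q:_RM)/\mathrm{Ann}(M)$.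 *)

From Stdlib Require List.
From HB Require Import structures.
From mathcomp Require Import all_boot all_algebra.
Set Implicit Arguments.
Unset Strict Implicit.
Unset Printing Implicit Defensive.
Import GRing.Theory.
Local Open Scope ring_scope.

Record group_str := GroupStr {
  gcarrier :> Type;
  gmul : gcarrier -> gcarrier -> gcarrier;
  gone : gcarrier;
  ginv : gcarrier -> gcarrier;
  gmulA : forall x y z, gmul x (gmul y z) = gmul (gmul x y) z;
  gmul1g : forall x, gmul gone x = x;
  gmulVg : forall x, gmul (ginv x) x = gone }.

Section Grading.
Variables (G : group_str) (V : zmodType) (VG : G -> V -> Prop).

Definition hsum (l : seq (G * V)) : V := \sum_(p <- l) p.2.

Definition is_decomp (x : V) (l : seq (G * V)) : Prop :=
  [/\ List.NoDup (map fst l), (forall p, List.In p l -> VG p.1 p.2)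
    & x = hsum l].

Definition direct_sum_grading : Prop :=
  [/\ (forall g, VG g 0 /\ (forall x y, VG g x -> VG g y -> VG g (x - y))),
      (forall x, exists l, is_decomp x l)
    & (forall l, is_decomp 0 l -> forall p, List.In p l -> p.2 = 0)].

Definition homogeneous (x : V) : Prop := exists g, VG g x.
End Grading.

Record graded_ring (G : group_str) (R : comNzRingType) := GradedRing {
  rgrade : G -> R -> Prop;
  rgrade_ds : direct_sum_grading rgrade;
  rgrade_mul : forall g h a b, rgrade g a -> rgrade h b ->
                 rgrade (gmul g h) (a * b) }.

Record graded_module (G : group_str) (R : comNzRingType) (RG : graded_ring G R)
    (M : lmodType R) := GradedModule {
  mgrade : G -> M -> Prop;
  mgrade_ds : direct_sum_grading mgrade;
  mgrade_scale : forall g h r m, rgrade RG g r -> mgrade h m ->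
                 mgrade (gmul g h) (r *: m) }.

Section GradedTheory.
Variables (G : group_str) (R : comNzRingType) (RG : graded_ring G R).
Variables (M : lmodType R) (MG : graded_module RG M).

Definition hR (r : R) := homogeneous (rgrade RG) r.
Definition hM (m : M) := homogeneous (mgrade MG) m.

Definition submodule (K : M -> Prop) : Prop :=
  [/\ K 0, (forall x y, K x -> K y -> K (x + y))
    & (forall r x, K x -> K (r *: x))].
Definition graded_submodule (K : M -> Prop) : Prop :=
  submodule K /\ forall x, K x ->
    exists l, is_decomp (mgrade MG) x l /\ forall p, List.In p l -> K p.2.
Definition proper_sub (K : M -> Prop) : Prop := exists m, ~ K m.

Definition ideal (I : R -> Prop) : Prop :=
  [/\ I 0, (forall x y, I x -> I y -> I (x + y))
    & (forall r x, I x -> I (r * x))].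
Definition graded_ideal (I : R -> Prop) : Prop :=
  ideal I /\ forall x, I x ->
    exists l, is_decomp (rgrade RG) x l /\ forall p, List.In p l -> I p.2.
Definition proper_ideal (I : R -> Prop) : Prop := exists r, ~ I r.

Definition colon (K : M -> Prop) : R -> Prop := fun r => forall m, K (r *: m).
Definition ann : R -> Prop := fun r => forall m : M, r *: m = 0.

Definition Gr (I : R -> Prop) : R -> Prop := fun r =>
  exists l, is_decomp (rgrade RG) r l /\
    forall p, List.In p l -> exists n, I (p.2 ^+ n).

Definition graded_prime_ideal (p : R -> Prop) : Prop :=
  [/\ graded_ideal p, proper_ideal p &
      forall a b, hR a -> hR b -> p (a * b) -> p a \/ p b].

Definition graded_prime_submodule (P : M -> Prop) : Prop :=
  [/\ graded_submodule P, proper_sub P &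
      forall r m, hR r -> hM m -> P (r *: m) -> P m \/ colon P r].

Definition GrM (K : M -> Prop) : M -> Prop := fun m =>
  forall P, graded_prime_submodule P -> (forall x, K x -> P x) -> P m.

Definition primeful (K : M -> Prop) : Prop :=
  forall p, graded_prime_ideal p -> (forall r, colon K r -> p r) ->
    exists P, [/\ graded_prime_submodule P, (forall x, K x -> P x) &
                  forall r, colon P r <-> p r].

Definition graded_quasi_primary_submodule (Q : M -> Prop) : Prop :=
  [/\ graded_submodule Q, proper_sub Q &
      forall r m, hR r -> hM m -> Q (r *: m) -> Gr (colon Q) r \/ GrM Q m].

Definition qpSpec (Q : M -> Prop) : Prop :=
  graded_quasi_primary_submodule Q /\ primeful Q.

Definition qpV (K : M -> Prop) (Q : M -> Prop) : Prop :=
  qpSpec Q /\ forall r, Gr (colon K) r -> Gr (colon Q) r.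

Definition qz_closed (C : (M -> Prop) -> Prop) : Prop :=
  exists K, graded_submodule K /\ forall Q, C Q <-> qpV K Q.
Definition qz_open (U : (M -> Prop) -> Prop) : Prop :=
  exists K, graded_submodule K /\ forall Q, U Q <-> (qpSpec Q /\ ~ qpV K Q).

Definition quasi_compact (A : (M -> Prop) -> Prop) : Prop :=
  forall F : ((M -> Prop) -> Prop) -> Prop,
    (forall U, F U -> qz_open U) ->
    (forall Q, A Q -> exists U, F U /\ U Q) ->
    exists s : seq ((M -> Prop) -> Prop),
      (forall U, List.In U s -> F U) /\
      (forall Q, A Q -> exists U, List.In U s /\ U Q).

(* Graded quasi-primary ideals of Rbar = R/Ann(M), described through the
   correspondence q = I/Ann(M) with I a graded ideal of R containing Ann(M). *)
Definition gqp_ideal_of_quotient (I : R -> Prop) : Prop :=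
  [/\ graded_ideal I, (forall r, ann r -> I r), proper_ideal I &
      forall a b, hR a -> hR b -> I (a * b) -> Gr I a \/ Gr I b].

(* psi^q : Q |-> (Q :_R M)/Ann(M) is surjective onto qp.Spec_g(Rbar) *)
Definition psi_q_surjective : Prop :=
  forall I, gqp_ideal_of_quotient I ->
    exists Q, qpSpec Q /\ forall r, colon Q r <-> I r.

End GradedTheory.

From HB Require Import structures.
From mathcomp Require Import all_boot all_algebra.
From mathcomp Require Import boolp zify ring.
From mathcomp Require classical_sets.
From Stdlib Require FinFun.
Set Implicit Arguments.
Unset Strict Implicit.
Unset Printing Implicit Defensive.
Import GRing.Theory.
Local Open Scope ring_scope.

(* For homogeneous f let D(f) be the set of Q in qp.Spec_g(M) such that f lies
   outside the radical of (Q :_R M); it is the complement of qp-V(fM).  By the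
   primeful property every graded prime p containing (Q :_R M) is (P :_R M) for
   a graded prime submodule P containing Q, hence containing Gr_M(Q); together
   with quasi-primariness this makes the homogeneous part of that radical
   prime.  So D(f) and D(g) meet in D(fg), and the D(f) form a base.
   Surjectivity of psi^q makes each D(f) quasi-compact: if D(f) is covered by
   sets D(c), some power of f lies in the ideal generated by the c's and
   Ann(M), since otherwise a graded prime p containing that ideal and avoiding
   f (Zorn) equals (Q :_R M) for some Q in D(f) lying in no D(c).  Hence a
   quasi-compact open set is a finite union of D(f)'s, and the intersection of
   two of them is the finite union of the D(fg). *)

Lemma big_In_ind {T : Type} {V : zmodType} (P : V -> Prop) (F : T -> V) (s : seq T) :
  P 0 -> (forall x y, P x -> P y -> P (x + y)) ->
  (forall t, List.In t s -> P (F t)) -> P (\sum_(t <- s) F t).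
Proof.
move=> P0 PD; elim: s => [|t s IH] Ps; first by rewrite big_nil.
by rewrite big_cons; apply: PD; [apply: Ps; left | apply: IH => u su; apply: Ps; right].
Qed.

Lemma In_choice {A B : Type} (P : A -> B -> Prop) (l : seq A) :
  (forall a, List.In a l -> exists b, P a b) ->
  exists s : seq B, (forall b, List.In b s -> exists2 a, List.In a l & P a b) /\
                    (forall a, List.In a l -> exists2 b, List.In b s & P a b).
Proof.
elim: l => [|a l IH] Pl; first by exists [::].
have [s [sl ls]] := IH (fun a' la' => Pl a' (or_intror la')).
have [b Pab] := Pl a (or_introl erefl).
exists (b :: s); split.
- by move=> b' [<-|/sl [a' la' Pa'b']]; [exists a; [left|] | exists a'; [right|]].
- by move=> a' [<-|/ls [b' sb' Pa'b']]; [exists b; [left|] | exists b'; [right|]].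
Qed.

Lemma gmulgV (G : group_str) (x : G) : gmul x (ginv x) = gone G.
Proof.
rewrite -[gmul x _]gmul1g -(gmulVg (ginv x)) -gmulA (gmulA (ginv x)) gmulVg.
by rewrite gmul1g.
Qed.

Lemma gmulg1 (G : group_str) (x : G) : gmul x (gone G) = x.
Proof. by rewrite -(gmulVg x) gmulA gmulgV gmul1g. Qed.

Lemma gmulIg (G : group_str) (d : G) : injective (fun x => gmul x d).
Proof.
move=> x y /(congr1 (fun z => gmul z (ginv d))) /=.
by rewrite -!gmulA gmulgV !gmulg1.
Qed.

Section DirectSumGrading.
Variables (G : group_str) (V : zmodType) (VG : G -> V -> Prop).
Hypothesis VG_ds : direct_sum_grading VG.
Implicit Types (l : seq (G * V)) (p q : G * V).

Lemma grade0 g : VG g 0.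
Proof. by case: VG_ds => sub _ _; case: (sub g). Qed.

Lemma gradeB g x y : VG g x -> VG g y -> VG g (x - y).
Proof. by case: VG_ds => sub _ _; case: (sub g) => _; apply. Qed.

Lemma gradeN g x : VG g x -> VG g (- x).
Proof. by move=> Vx; rewrite -sub0r; apply: gradeB (grade0 g) Vx. Qed.

Lemma gradeD g x y : VG g x -> VG g y -> VG g (x + y).
Proof. by move=> Vx Vy; rewrite -[y]opprK; apply: gradeB Vx (gradeN Vy). Qed.

Lemma hsum_nil : hsum ([::] : seq (G * V)) = 0.
Proof. exact: big_nil. Qed.

Lemma hsum_cons p l : hsum (p :: l) = p.2 + hsum l.
Proof. exact: big_cons. Qed.

Lemma hsum_cat l1 l2 : hsum (l1 ++ l2) = hsum l1 + hsum l2.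
Proof. exact: big_cat. Qed.

Lemma hsum_In_ind (P : V -> Prop) l : P 0 -> (forall x y, P x -> P y -> P (x + y)) ->
  (forall p, List.In p l -> P p.2) -> P (hsum l).
Proof. exact: big_In_ind. Qed.

Lemma decomp1 g x : VG g x -> is_decomp VG x [:: (g, x)].
Proof.
move=> Vx; split; first by constructor; [case | constructor].
  by move=> p [<-|[]].
by rewrite hsum_cons hsum_nil addr0.
Qed.

Fixpoint insert_component p l : seq (G * V) :=
  if l is q :: l' then
    if pselect (q.1 = p.1) then (q.1, q.2 + p.2) :: l' else q :: insert_component p l'
  else [:: p].

Definition collect l := foldr insert_component [::] l.

Lemma In_degrees_insert p l g :
  List.In g (map fst (insert_component p l)) <-> g = p.1 \/ List.In g (map fst l).
Proof.
elim: l => [|q l IH] /=; first by split; [case=> // ->; left | case=> [->|[]]; left].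
case: pselect => [qp|nqp] /=; last by rewrite IH; tauto.
rewrite qp; split; first by case=> [<-|]; [left | right; right].
by case=> [->|[<-|]]; [left | left | right].
Qed.

Lemma NoDup_insert p l : List.NoDup (map fst l) -> List.NoDup (map fst (insert_component p l)).
Proof.
elim: l => [|q l IH] /=; first by move=> _; constructor; [case | constructor].
case: pselect => [qp|nqp] //= nd; inversion nd; subst.
by constructor; [rewrite In_degrees_insert; case=> // /esym | apply: IH].
Qed.

Lemma hsum_insert p l : hsum (insert_component p l) = p.2 + hsum l.
Proof.
elim: l => [|q l IH] /=; first by rewrite hsum_cons hsum_nil addr0.
by case: pselect => ?; rewrite !hsum_cons /= ?IH addrCA // addrA.
Qed.

Lemma insert_homogeneous (P : V -> Prop) p l :
  (forall x y, P x -> P y -> P (x + y)) -> VG p.1 p.2 -> P p.2 ->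
  (forall q, List.In q l -> VG q.1 q.2 /\ P q.2) ->
  forall q, List.In q (insert_component p l) -> VG q.1 q.2 /\ P q.2.
Proof.
move=> PD Vp Pp; elim: l => [|q0 l IH] /= Vl q; first by case=> // <-.
case: pselect => [q0p|nq0p] /=.
  case=> [<-|lq]; last by apply: Vl; right.
  have [Vq0 Pq0] := Vl q0 (or_introl erefl).
  by split; [apply: gradeD => //; rewrite q0p | apply: PD].
case=> [<-|lq]; first by apply: Vl; left.
by apply: IH lq => q' lq'; apply: Vl; right.
Qed.

Lemma collect_decomp (P : V -> Prop) l :
  P 0 -> (forall x y, P x -> P y -> P (x + y)) ->
  (forall q, List.In q l -> VG q.1 q.2 /\ P q.2) ->
  is_decomp VG (hsum l) (collect l) /\ (forall q, List.In q (collect l) -> P q.2).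
Proof.
move=> P0 PD; elim: l => [|p l IH] Vl /=.
  by rewrite hsum_nil; split; [split; [exact: List.NoDup_nil | by [] | rewrite hsum_nil] |].
have [[nd Vc hc] Pc] := IH (fun q lq => Vl q (or_intror lq)).
have [Vp Pp] := Vl p (or_introl erefl).
have Vi := insert_homogeneous PD Vp Pp (fun q cq => conj (Vc q cq) (Pc q cq)).
split; last by move=> q /Vi [].
split; [exact: NoDup_insert | by move=> q /Vi [] | by rewrite hsum_insert hsum_cons hc].
Qed.

Definition component l g : V := \sum_(p <- l) (if pselect (p.1 = g) then p.2 else 0).

Lemma component_cons p l g :
  component (p :: l) g = (if pselect (p.1 = g) then p.2 else 0) + component l g.
Proof. exact: big_cons. Qed.

Lemma component_cat l1 l2 g : component (l1 ++ l2) g = component l1 g + component l2 g.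
Proof. exact: big_cat. Qed.

Lemma component_insert p l g :
  component (insert_component p l) g = component [:: p] g + component l g.
Proof.
rewrite component_cons [component [::] _]big_nil addr0.
elim: l => [|q l IH] /=; first by rewrite component_cons [component [::] _]big_nil !addr0.
case: pselect => [qp|nqp]; rewrite !component_cons /=.
  by rewrite qp; case: (pselect (p.1 = g)) => ?; rewrite ?add0r // addrA (addrC p.2).
by rewrite IH addrCA.
Qed.

Lemma component_collect l g : component (collect l) g = component l g.
Proof.
elim: l => [|p l IH] //=.
by rewrite component_insert IH !component_cons [component [::] _]big_nil addr0.
Qed.

Lemma component_eq0 l g : (forall q, List.In q l -> q.2 = 0) -> component l g = 0.
Proof.
elim: l => [|p l IH] l0; first exact: big_nil.
rewrite component_cons IH => [|q lq]; last by apply: l0; right.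
by rewrite (l0 p (or_introl erefl)); case: pselect => ?; rewrite addr0.
Qed.

Lemma component_notin l g : ~ List.In g (map fst l) -> component l g = 0.
Proof.
elim: l => [|p l IH] ngl; first exact: big_nil.
rewrite component_cons IH; last by move=> gl; apply: ngl; right.
by case: pselect => [pg|?]; [case: ngl; left | rewrite addr0].
Qed.

Lemma component_In l p : List.NoDup (map fst l) -> List.In p l -> component l p.1 = p.2.
Proof.
elim: l => [|q l IH] //= nd; inversion nd as [|q1 l1 nql ndl]; subst => -[<-|lp].
  by rewrite component_cons component_notin // addr0; case: pselect.
rewrite component_cons IH //; case: pselect => [qp|?]; last by rewrite add0r.
by case: nql; rewrite qp; apply: List.in_map.
Qed.

Definition oppl l := [seq (q.1, - q.2) | q <- l].

Lemma component_oppl l g : component (oppl l) g = - component l g.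
Proof.
elim: l => [|p l IH] /=; first by rewrite [component [::] _]big_nil oppr0.
rewrite component_cons IH (component_cons p) opprD /=.
by case: (pselect (p.1 = g)) => ?; rewrite ?oppr0.
Qed.

Lemma hsum_oppl l : hsum (oppl l) = - hsum l.
Proof.
by elim: l => [|p l IH] /=; rewrite ?hsum_nil ?oppr0 // !hsum_cons IH opprD.
Qed.

Lemma decomp_component_uniq x l1 l2 g :
  is_decomp VG x l1 -> is_decomp VG x l2 -> component l1 g = component l2 g.
Proof.
move=> [_ V1 x1] [_ V2 x2].
have Vl : forall q, List.In q (l1 ++ oppl l2) -> VG q.1 q.2 /\ True.
  move=> q /List.in_app_iff [/V1 //|/List.in_map_iff [p [<- /V2 Vp]]].
  by split => //; apply: gradeN.
have [dec0 _] := collect_decomp (P := fun _ => True) I (fun _ _ _ _ => I) Vl.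
move: dec0; rewrite hsum_cat hsum_oppl -x1 -x2 subrr => dec0.
have [_ _ zero] := VG_ds.
have := component_eq0 g (zero _ dec0).
by rewrite component_collect component_cat component_oppl => /eqP; rewrite subr_eq0 => /eqP.
Qed.

Lemma decomp_mem_uniq x l1 l2 p :
  is_decomp VG x l1 -> is_decomp VG x l2 -> List.In p l1 -> p.2 = 0 \/ List.In p l2.
Proof.
move=> d1 d2 l1p; have := decomp_component_uniq p.1 d1 d2.
case: d1 d2 => [nd1 _ _] [nd2 _ _]; rewrite (component_In nd1 l1p).
have [/List.in_map_iff [q [qp l2q]]|ng] := pselect (List.In p.1 (map fst l2)).
  rewrite -qp (component_In nd2 l2q) => pq; right.
  by move: l2q; rewrite [q]surjective_pairing [p]surjective_pairing qp pq.
by rewrite component_notin //; left.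
Qed.

End DirectSumGrading.

Section Ideals.
Variable R : comNzRingType.
Implicit Types (I J A : R -> Prop) (a b c f x : R).

Definition rad I c := exists n, I (c ^+ n).

Definition ideal_span (S : R -> Prop) x :=
  exists l : seq (R * R), (forall p, List.In p l -> S p.2) /\ x = \sum_(p <- l) p.1 * p.2.

Definition ideal_plus I J x := exists y z, [/\ I y, J z & x = y + z].

Definition principal_ideal c x := exists z, x = z * c.

Lemma rad_exp I c n : rad I (c ^+ n) -> rad I c.
Proof. by case=> k Ick; exists (n * k)%N; rewrite exprM. Qed.

Lemma ideal_muln I x k : ideal I -> I x -> I (x *+ k).
Proof.
move=> [I0 ID _] Ix; elim: k => [|k IH]; first by rewrite mulr0n.
by rewrite mulrS; apply: ID.
Qed.

Lemma rad_ideal I : ideal I -> ideal (rad I).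
Proof.
move=> idI; have [I0 ID IM] := idI; split.
- by exists 1%N; rewrite expr1.
- move=> x y [n xn] [m ym]; exists (n + m)%N.
  rewrite exprDn; apply: (big_ind I) => // i _; apply: ideal_muln => //.
  have [ni|lt_n] := leqP n (n + m - i).
    by rewrite -(subnK ni) exprD mulrAC; apply: IM.
  have mi : (m <= i)%N by lia.
  by rewrite -(subnK mi) exprD mulrA; apply: IM.
- by move=> r x [n xn]; exists n; rewrite exprMn; apply: IM.
Qed.

Lemma rad_setI I J x : ideal I -> ideal J -> rad I x -> rad J x ->
  rad (fun y => I y /\ J y) x.
Proof.
move=> [_ _ IM] [_ _ JM] [n xn] [m xm]; exists (n + m)%N.
by rewrite exprD; split; [rewrite mulrC|]; [apply: IM xn | apply: JM xm].
Qed.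

Lemma ideal_span_ideal S : ideal (ideal_span S).
Proof.
split.
- by exists [::]; rewrite big_nil.
- move=> _ _ [l1 [S1 ->]] [l2 [S2 ->]]; exists (l1 ++ l2); rewrite big_cat.
  by split => // p /List.in_app_iff [/S1|/S2].
- move=> r _ [l [Sl ->]]; exists [seq (r * p.1, p.2) | p <- l]; split.
    by move=> _ /List.in_map_iff [p [<- /Sl]].
  by rewrite big_map mulr_sumr; apply: eq_bigr => p _; rewrite mulrA.
Qed.

Lemma ideal_span_gen (S : R -> Prop) c : S c -> ideal_span S c.
Proof.
by move=> Sc; exists [:: (1, c)]; split => [p [<-|[]] //|]; rewrite big_seq1 mul1r.
Qed.

Lemma ideal_plus_ideal I J : ideal I -> ideal J -> ideal (ideal_plus I J).
Proof.
move=> [I0 ID IM] [J0 JD JM]; split.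
- by exists 0, 0; rewrite addr0.
- move=> _ _ [y1 [z1 [Iy1 Jz1 ->]]] [y2 [z2 [Iy2 Jz2 ->]]].
  by exists (y1 + y2), (z1 + z2); rewrite addrACA; split; [apply: ID | apply: JD |].
- move=> r _ [y [z [Iy Jz ->]]].
  by exists (r * y), (r * z); rewrite mulrDr; split; [apply: IM | apply: JM |].
Qed.

Lemma principal_ideal_ideal c : ideal (principal_ideal c).
Proof.
split.
- by exists 0; rewrite mul0r.
- by move=> _ _ [z ->] [z' ->]; exists (z + z'); rewrite mulrDl.
- by move=> r _ [z ->]; exists (r * z); rewrite mulrA.
Qed.

Definition avoids_powers I f A :=
  [/\ ideal A, (forall x, I x -> A x) & forall n, ~ A (f ^+ n)].

Lemma bigcup_avoids_powers I f (F : (R -> Prop) -> Prop) A0 :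
  (forall A x, F A -> A x -> avoids_powers I f A) ->
  classical_sets.total_on F classical_sets.subset ->
  F A0 -> avoids_powers I f A0 ->
  avoids_powers I f (classical_sets.bigcup F id).
Proof.
move=> Fav Ftot FA0 [[A00 _ _] IA0 _].
have common x y : classical_sets.bigcup F id x -> classical_sets.bigcup F id y ->
    exists A, [/\ F A, A x & A y].
  move=> [A FA Ax] [B FB By]; case: (Ftot A B FA FB) => [AB|BA].
    by exists B; split => //; apply: AB.
  by exists A; split => //; apply: BA.
split; first split.
- by exists A0.
- move=> x y Ux Uy; have [A [FA Ax Ay]] := common x y Ux Uy.
  by have [[_ AD _] _ _] := Fav A x FA Ax; exists A => //; apply: AD.
- by move=> r x [A FA Ax]; have [[_ _ AM] _ _] := Fav A x FA Ax; exists A => //; apply: AM.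
- by move=> x Ix; exists A0 => //; apply: IA0.
- by move=> n [A FA An]; have [_ _ Af] := Fav A _ FA An; apply: Af An.
Qed.

Lemma maximal_avoids_powers I f : avoids_powers I f I ->
  exists A, avoids_powers I f A /\
    forall B, avoids_powers I f B -> (forall x, A x -> B x) -> forall x, B x -> A x.
Proof.
move=> avI.
pose P A := A = classical_sets.set0 \/ avoids_powers I f A.
have [A [PA Amax]] : exists A, P A /\ forall B, classical_sets.proper A B -> ~ P B.
  apply: classical_sets.Zorn_bigcup => F FP Ftot.
  have Fav B x : F B -> B x -> avoids_powers I f B.
    by move=> FB; case: (FP B FB) => // -> [].
  have [[A0 FA0 avA0]|nav] := pselect (exists2 A, F A & avoids_powers I f A).
    by right; apply: bigcup_avoids_powers Fav Ftot FA0 avA0.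
  left; apply/funext => x; apply/propext; split => // -[B FB Bx].
  by apply: nav; exists B => //; apply: Fav FB Bx.
have avA : avoids_powers I f A.
  case: PA => // A0; case: (Amax I); last by right.
  have [[I0 _ _] _ _] := avI.
  by rewrite A0; split => [x []|/(_ 0 I0)].
exists A; split => // B avB AB x Bx; apply: contrapT => nAx.
by apply: (Amax B); [split => // BA; apply: nAx (BA x Bx) | right].
Qed.

Lemma maximal_avoids_powers_prime I f A : avoids_powers I f A ->
  (forall B, avoids_powers I f B -> (forall x, A x -> B x) -> forall x, B x -> A x) ->
  forall a b, A (a * b) -> A a \/ A b.
Proof.
move=> [idA IA Af] Amax a b Aab; have [A0 AD AM] := idA.
have Ac_inc c x : A x -> ideal_plus A (principal_ideal c) x.
  by move=> Ax; exists x, 0; split => //; [exists 0; rewrite mul0r | rewrite addr0].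
have power_in c : ~ A c -> exists n, ideal_plus A (principal_ideal c) (f ^+ n).
  move=> nAc; apply: contrapT => nf; apply: nAc.
  apply: (Amax (ideal_plus A (principal_ideal c))); last first.
  - by exists 0, c; split => //; [exists 1; rewrite mul1r | rewrite add0r].
  - exact: Ac_inc.
  split; first exact: ideal_plus_ideal idA (principal_ideal_ideal c).
    by move=> x /IA /Ac_inc.
  by move=> n fn; apply: nf; exists n.
have [Aa|nAa] := pselect (A a); first by left.
have [Ab|nAb] := pselect (A b); first by right.
have [n [y [_ [Ay [z ->] fn]]]] := power_in a nAa.
have [k [y' [_ [Ay' [z' ->] fk]]]] := power_in b nAb.
case: (Af (n + k)%N); rewrite exprD fn fk.
have -> : (y + z * a) * (y' + z' * b) =
    (y' + z' * b) * y + (z * a) * y' + (z * z') * (a * b) by ring.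
by apply: (AD); [apply: (AD)|]; apply: (AM).
Qed.

End Ideals.

Section GradedRing.
Variables (G : group_str) (R : comNzRingType) (RG : graded_ring G R).
Implicit Types (I J p : R -> Prop) (a b c f x : R).

Lemma hR_mul a b : hR RG a -> hR RG b -> hR RG (a * b).
Proof. by move=> [g ag] [h bh]; exists (gmul g h); apply: rgrade_mul. Qed.

Lemma hR_exp c n : hR RG c -> hR RG (c ^+ n.+1).
Proof. by move=> hc; elim: n => [|n IH]; rewrite ?expr1 // exprS; apply: hR_mul. Qed.

Lemma Gr_of_rad I c : hR RG c -> rad I c -> Gr RG I c.
Proof. by move=> [g cg] rc; exists [:: (g, c)]; split; [exact: decomp1 | move=> p [<-|[]]]. Qed.

Lemma rad_of_Gr I c : I 0 -> hR RG c -> Gr RG I c -> rad I c.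
Proof.
move=> I0 [g cg] [l [dl Il]].
have [/= ->|/Il //] := decomp_mem_uniq (rgrade_ds RG) (decomp1 cg) dl (or_introl erefl).
by exists 1%N; rewrite expr1.
Qed.

Lemma graded_prime_rad p b : graded_prime_ideal RG p -> hR RG b -> rad p b -> p b.
Proof.
move=> [[[_ _ pM] _] _ pP] hb [[|n]].
  by rewrite expr0 => p1; rewrite -[b]mulr1; apply: pM.
elim: n => [|n IH]; first by rewrite expr1.
by rewrite exprS => /(pP _ _ hb (hR_exp n hb)) [].
Qed.

Definition graded_core I x :=
  exists l, is_decomp (rgrade RG) x l /\ forall q, List.In q l -> I q.2.

Lemma graded_core_sub I x : ideal I -> graded_core I x -> I x.
Proof. by move=> [I0 ID _] [l [[_ _ ->] Il]]; apply: hsum_In_ind. Qed.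

Lemma graded_core_homogeneous I x : hR RG x -> I x -> graded_core I x.
Proof. by move=> [g xg] Ix; exists [:: (g, x)]; split; [exact: decomp1 | move=> q [<-|[]]]. Qed.

Lemma graded_core_max I J : graded_ideal RG J -> (forall x, J x -> I x) ->
  forall x, J x -> graded_core I x.
Proof. by move=> [_ gJ] JI x /gJ [l [dl Jl]]; exists l; split => // q /Jl /JI. Qed.

Lemma graded_core_graded I : ideal I -> graded_ideal RG (graded_core I).
Proof.
move=> [I0 ID IM]; have ds := rgrade_ds RG.
have core0 : graded_core I 0.
  by exists [::]; split => //; split; [exact: List.NoDup_nil | by [] | rewrite hsum_nil].
have coreD x y : graded_core I x -> graded_core I y -> graded_core I (x + y).
  move=> [lx [[_ Vx ->] Ix]] [ly [[_ Vy ->] Iy]].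
  have Vl q : List.In q (lx ++ ly) -> rgrade RG q.1 q.2 /\ I q.2.
    by move=> /List.in_app_iff [lq|lq]; split; [apply: Vx | apply: Ix | apply: Vy | apply: Iy].
  have [dl Il] := collect_decomp ds I0 ID Vl.
  by exists (collect (lx ++ ly)); rewrite -hsum_cat; split.
have coreMh r x : hR RG r -> graded_core I x -> graded_core I (r * x).
  move=> [g rg] [lx [[_ Vx ->] Ix]].
  pose l := [seq (gmul g q.1, r * q.2) | q <- lx].
  have Vl q : List.In q l -> rgrade RG q.1 q.2 /\ I q.2.
    move=> /List.in_map_iff [q' [<- lq']].
    by split; [apply: rgrade_mul rg (Vx q' lq') | apply: IM; apply: Ix].
  have [dl Il] := collect_decomp ds I0 ID Vl.
  have -> : r * hsum lx = hsum l by rewrite /hsum big_map mulr_sumr.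
  by exists (collect l); split.
split; first split => //.
  move=> r x cx; have [_ decR _] := ds; have [lr [_ Vr ->]] := decR r.
  rewrite /hsum mulr_suml; apply: big_In_ind => // q lq.
  exact: coreMh (ex_intro _ q.1 (Vr q lq)) cx.
move=> x [l [dl Il]]; exists l; split => // q lq; apply: graded_core_homogeneous (Il q lq).
by case: dl => _ Vl _; exists q.1; apply: Vl.
Qed.

Lemma graded_prime_avoiding I f : ideal I -> hR RG f -> (forall n, ~ I (f ^+ n)) ->
  exists p, [/\ graded_prime_ideal RG p, (forall x, graded_core I x -> p x) & ~ p f].
Proof.
move=> idI hf If.
have [A [avA Amax]] := maximal_avoids_powers (And3 idI (fun x => id) If).
have Aprime := maximal_avoids_powers_prime avA Amax.
have [idA IA Af] := avA.
have nAf : ~ A f by move=> Af1; apply: (Af 1%N); rewrite expr1.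
exists (graded_core A); split.
- split; [exact: graded_core_graded | by exists f => /(graded_core_sub idA) |].
  move=> a b ha hb /(graded_core_sub idA) /Aprime [Aa|Ab]; [left|right].
    exact: graded_core_homogeneous.
  exact: graded_core_homogeneous.
- by move=> x [l [dl Il]]; exists l; split => // q /Il /IA.
- by move/(graded_core_sub idA).
Qed.

End GradedRing.

Section GradedModule.
Variables (G : group_str) (R : comNzRingType) (RG : graded_ring G R).
Variables (M : lmodType R) (MG : graded_module RG M).
Implicit Types (K Q P : M -> Prop) (p : R -> Prop) (a b c f r : R).

Lemma hM_scale r m : hR RG r -> hM MG m -> hM MG (r *: m).
Proof. by move=> [g rg] [h mh]; exists (gmul g h); apply: mgrade_scale. Qed.

Lemma colon_ideal K : submodule K -> ideal (colon K).
Proof.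
move=> [K0 KD KZ]; split.
- by move=> m; rewrite scale0r.
- by move=> x y Kx Ky m; rewrite scalerDl; apply: KD.
- by move=> r x Kx m; rewrite -scalerA; apply: KZ.
Qed.

Lemma colon0 K : submodule K -> colon K 0.
Proof. by case/colon_ideal. Qed.

Lemma colon_homogeneous K r : submodule K ->
  (forall m, hM MG m -> K (r *: m)) -> colon K r.
Proof.
move=> [K0 KD _] Kh m; have [_ decM _] := mgrade_ds MG.
have [l [_ Vl ->]] := decM m; rewrite /hsum scaler_sumr.
by apply: big_In_ind => // q lq; apply: Kh; exists q.1; apply: Vl.
Qed.

Lemma colon_graded K : graded_submodule MG K -> graded_ideal RG (colon K).
Proof.
move=> [sK gK]; have [K0 _ _] := sK; split; first exact: colon_ideal.
move=> r Kr; have [_ decR _] := rgrade_ds RG; have [l dl] := decR r.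
exists l; split => // p lp; apply: colon_homogeneous => // m [h mh].
have [ndl Vl rl] := dl.
pose L := [seq (gmul q.1 h, q.2 *: m) | q <- l].
have dL : is_decomp (mgrade MG) (r *: m) L.
  split.
  - rewrite -map_comp (map_comp (fun g => gmul g h) fst).
    exact: FinFun.Injective_map_NoDup (@gmulIg G h) ndl.
  - by move=> _ /List.in_map_iff [q [<- lq]]; apply: mgrade_scale (Vl q lq) mh.
  - by rewrite /hsum big_map rl /hsum scaler_suml.
have [lK [dK KlK]] := gK _ (Kr m).
have Lp : List.In (gmul p.1 h, p.2 *: m) L by apply: List.in_map.
by case: (decomp_mem_uniq (mgrade_ds MG) dL dK Lp) => [/= ->|/KlK].
Qed.

Lemma zero_graded : graded_submodule MG (fun m => m = 0).
Proof.
split; first split => //.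
- by move=> x y -> ->; rewrite addr0.
- by move=> r x ->; rewrite scaler0.
move=> x ->; exists [::]; split => //.
by split; [exact: List.NoDup_nil | by [] | rewrite hsum_nil].
Qed.

Lemma ann_graded : graded_ideal RG (ann M).
Proof. exact: colon_graded zero_graded. Qed.

Lemma GrM_submodule Q : submodule (GrM MG Q).
Proof.
split.
- by move=> P [[[P0 _ _] _] _ _] _.
- move=> x y Qx Qy P gP QP; have [[[_ PD _] _] _ _] := gP.
  by apply: PD; [apply: Qx | apply: Qy].
- by move=> r x Qx P gP QP; have [[[_ _ PZ] _] _ _] := gP; apply: PZ; apply: Qx.
Qed.

Lemma qp_colon_GrM Q a b : graded_quasi_primary_submodule MG Q ->
  hR RG a -> hR RG b -> colon Q (a * b) -> ~ rad (colon Q) a -> colon (GrM MG Q) b.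
Proof.
move=> [[sQ _] _ qpQ] ha hb abQ nra.
apply: colon_homogeneous (GrM_submodule Q) _ => m hm.
have abm : Q (a *: (b *: m)) by rewrite scalerA; apply: abQ.
case: (qpQ a (b *: m) ha (hM_scale hb hm) abm) => // /(rad_of_Gr (colon0 sQ) ha).
by move/nra.
Qed.

Lemma primeful_colon_GrM Q b : graded_submodule MG Q -> primeful MG Q ->
  hR RG b -> colon (GrM MG Q) b -> rad (colon Q) b.
Proof.
move=> gQ pfQ hb bGrM; apply: contrapT => nrb.
have [p [gp Qp nbp]] := graded_prime_avoiding (colon_ideal gQ.1) hb
  (fun n bn => nrb (ex_intro _ n bn)).
have [P [gP QP Pp]] := pfQ p gp (fun r Qr => Qp r (graded_core_max (colon_graded gQ) (fun _ => id) Qr)).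
by apply: nbp; apply/Pp => m; apply: bGrM m P gP QP.
Qed.

Lemma qpSpec_submodule Q : qpSpec MG Q -> submodule Q.
Proof. by case=> [[[sQ _] _ _] _]. Qed.

Lemma rad_colon_prime Q a b : qpSpec MG Q -> hR RG a -> hR RG b ->
  rad (colon Q) (a * b) -> rad (colon Q) a \/ rad (colon Q) b.
Proof.
move=> [qpQ pfQ] ha hb [[|n] abn].
  by left; exists 0%N; rewrite expr0 -(expr0 (a * b)).
have [ra|nra] := pselect (rad (colon Q) a); [by left | right].
apply: (@rad_exp _ _ _ n.+1); apply: primeful_colon_GrM (hR_exp n hb) _ => //.
  by case: qpQ.
apply: qp_colon_GrM qpQ (hR_exp n ha) (hR_exp n hb) _ _; first by rewrite -exprMn.
by move/rad_exp.
Qed.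

Lemma graded_prime_gqp p : graded_prime_ideal RG p -> (forall r, ann M r -> p r) ->
  gqp_ideal_of_quotient RG M p.
Proof.
move=> [gp pp prime] annp; have [[p0 _ _] _] := gp; split => // a b ha hb.
by move=> /(prime _ _ ha hb) [] pab; [left|right]; apply: Gr_of_rad => //;
  exists 1%N; rewrite expr1.
Qed.

Lemma qpV_homogeneous K Q : qpV MG K Q <->
  qpSpec MG Q /\ forall c, hR RG c -> rad (colon K) c -> rad (colon Q) c.
Proof.
split=> [[qQ KQ]|[qQ KQ]]; split => // c.
  move=> hc /(Gr_of_rad hc) /KQ.
  exact: rad_of_Gr (colon0 (qpSpec_submodule qQ)) hc.
move=> [l [dl Kl]]; exists l; split => // q lq; apply: KQ (Kl q lq).
by case: dl => _ Vl _; exists q.1; apply: Vl.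
Qed.

Lemma not_qpV K Q : qpSpec MG Q -> ~ qpV MG K Q ->
  exists c, [/\ hR RG c, rad (colon K) c & ~ rad (colon Q) c].
Proof.
move=> qQ nV; apply: contrapT => nc; apply/nV/qpV_homogeneous; split => // c hc rKc.
by apply: contrapT => nrQc; apply: nc; exists c.
Qed.

Lemma graded_submoduleI K1 K2 : graded_submodule MG K1 -> graded_submodule MG K2 ->
  graded_submodule MG (fun x => K1 x /\ K2 x).
Proof.
move=> [[K10 K1D K1Z] gK1] [[K20 K2D K2Z] gK2]; split; first split.
- by [].
- by move=> x y [? ?] [? ?]; split; [apply: K1D | apply: K2D].
- by move=> r x [? ?]; split; [apply: K1Z | apply: K2Z].
move=> x [/gK1 [l1 [d1 Kl1]] /gK2 [l2 [d2 Kl2]]].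
exists l1; split => // q lq; split; first exact: Kl1.
by case: (decomp_mem_uniq (mgrade_ds MG) d1 d2 lq) => [->|/Kl2].
Qed.

Lemma qpV_setI K1 K2 Q : submodule K1 -> submodule K2 ->
  qpV MG (fun x => K1 x /\ K2 x) Q <-> qpV MG K1 Q \/ qpV MG K2 Q.
Proof.
move=> sK1 sK2; split; last first.
  case=> /qpV_homogeneous [qQ KQ]; apply/qpV_homogeneous; split => // c hc [n Kcn];
    by apply: KQ hc _; exists n => m; case: (Kcn m).
move=> /qpV_homogeneous [qQ KQ]; apply: contrapT => /not_orP [nV1 nV2].
have [c1 [hc1 rK1 nrQ1]] := not_qpV qQ nV1.
have [c2 [hc2 rK2 nrQ2]] := not_qpV qQ nV2.
have [[_ _ rK1M] [_ _ rK2M]] := (rad_ideal (colon_ideal sK1), rad_ideal (colon_ideal sK2)).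
have rK12 : rad (colon K1) (c1 * c2) by rewrite mulrC; apply: rK1M.
have [n [Kn1 Kn2]] := rad_setI (colon_ideal sK1) (colon_ideal sK2) rK12 (rK2M c1 _ rK2).
have rK : rad (colon (fun x => K1 x /\ K2 x)) (c1 * c2).
  by exists n => m; split; [apply: Kn1 | apply: Kn2].
by case: (rad_colon_prime qQ hc1 hc2 (KQ _ (hR_mul hc1 hc2) rK)).
Qed.

Lemma qz_open_setI U V : qz_open MG U -> qz_open MG V -> qz_open MG (fun Q => U Q /\ V Q).
Proof.
move=> [K1 [gK1 eU]] [K2 [gK2 eV]].
exists (fun x => K1 x /\ K2 x); split; first exact: graded_submoduleI.
by move=> Q; rewrite qpV_setI ?eU ?eV; [tauto | case: gK1 | case: gK2].
Qed.

Definition qpD f Q := qpSpec MG Q /\ ~ rad (colon Q) f.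

Lemma qpD_mul f g Q : hR RG f -> hR RG g -> qpD (f * g) Q <-> qpD f Q /\ qpD g Q.
Proof.
move=> hf hg; split=> [[qQ nfg]|[[qQ nf] [_ ng]]].
  have [_ _ rM] := rad_ideal (colon_ideal (qpSpec_submodule qQ)).
  by split; split => // r; apply: nfg; [rewrite mulrC|]; apply: rM.
by split => // /(rad_colon_prime qQ hf hg) [].
Qed.

Definition scale_submodule f (x : M) := exists m, x = f *: m.

Lemma scale_submodule_graded f : hR RG f -> graded_submodule MG (scale_submodule f).
Proof.
move=> [g fg].
have sK : submodule (scale_submodule f).
  split.
  - by exists 0; rewrite scaler0.
  - by move=> _ _ [m ->] [m' ->]; exists (m + m'); rewrite scalerDr.
  - by move=> r _ [m ->]; exists (r *: m); rewrite !scalerA mulrC.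
have [K0 KD _] := sK; split => // _ [m ->].
have [_ decM _] := mgrade_ds MG; have [lm [_ Vm ->]] := decM m.
pose l := [seq (gmul g q.1, f *: q.2) | q <- lm].
have Vl q : List.In q l -> mgrade MG q.1 q.2 /\ scale_submodule f q.2.
  move=> /List.in_map_iff [q' [<- lq']].
  by split; [apply: mgrade_scale fg (Vm q' lq') | exists q'.2].
have [dl Kl] := collect_decomp (mgrade_ds MG) K0 KD Vl.
have -> : f *: hsum lm = hsum l by rewrite /hsum big_map scaler_sumr.
by exists (collect l); split.
Qed.

Lemma qpV_scale_submodule f Q : hR RG f ->
  qpV MG (scale_submodule f) Q <-> qpSpec MG Q /\ rad (colon Q) f.
Proof.
move=> hf; rewrite qpV_homogeneous; split=> [[qQ KQ]|[qQ [k fk]]]; split => //.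
  by apply: KQ hf _; exists 1%N => m; rewrite expr1; exists m.
move=> c hc [n cn].
have cnj j (m : M) : exists m', c ^+ (n * j) *: m = f ^+ j *: m'.
  elim: j m => [|j IH] m; first by exists m; rewrite muln0 !expr0.
  have [m' cm] := IH m; have [m'' cnm'] := cn m'.
  exists m''; rewrite mulnS exprD -scalerA cm scalerA mulrC -scalerA cnm'.
  by rewrite scalerA -exprSr.
by exists (n * k)%N => m; have [m' ->] := cnj k m; apply: fk.
Qed.

Lemma qpD_open f : hR RG f -> qz_open MG (qpD f).
Proof.
move=> hf; exists (scale_submodule f); split; first exact: scale_submodule_graded.
move=> Q; rewrite qpV_scale_submodule //; split=> [[qQ nf]|[qQ nV]]; split => //.
  by case=> _ /nf.
by move=> rf; apply: nV.
Qed.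

Lemma qpD_base U Q : qz_open MG U -> U Q ->
  exists f, [/\ hR RG f, qpD f Q & forall Q', qpD f Q' -> U Q'].
Proof.
move=> [K [gK eU]] /eU [qQ nV]; have [c [hc rKc nrQc]] := not_qpV qQ nV.
exists c; split => // Q' [qQ' nrQ'c]; apply/eU; split => //.
by move=> /qpV_homogeneous [_ KQ']; apply/nrQ'c/KQ'.
Qed.

Lemma rad_span_of_qpD_cover (S : R -> Prop) f : psi_q_surjective MG ->
  (forall c, S c -> hR RG c) -> hR RG f ->
  (forall Q, qpD f Q -> exists2 c, S c & qpD c Q) ->
  exists n, ideal_plus (ideal_span S) (ann M) (f ^+ n).
Proof.
move=> surj hS hf cover; apply: contrapT => nfI.
pose I := ideal_plus (ideal_span S) (ann M).
have idI : ideal I.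
  exact: ideal_plus_ideal (ideal_span_ideal S) (colon_ideal zero_graded.1).
have [p [gp Ip nfp]] := graded_prime_avoiding idI hf (fun n fnI => nfI (ex_intro _ n fnI)).
have annp r : ann M r -> p r.
  move=> ar; apply: Ip (graded_core_max ann_graded _ ar) => x ax.
  by exists 0, x; split => //; [have [] := ideal_span_ideal S | rewrite add0r].
have [Q [qQ Qp]] := surj p (graded_prime_gqp gp annp).
have radQ c : hR RG c -> rad (colon Q) c -> p c.
  by move=> hc [n cn]; apply: graded_prime_rad gp hc _; exists n; apply/Qp.
have [c Sc [_]] := cover Q (conj qQ (fun rf => nfp (radQ f hf rf))).
apply; exists 1%N; rewrite expr1; apply/Qp/Ip/graded_core_homogeneous; first exact: hS.
by exists c, 0; split; [exact: ideal_span_gen | exact: colon0 zero_graded.1 | rewrite addr0].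
Qed.

Lemma qpD_quasi_compact f : psi_q_surjective MG -> hR RG f -> quasi_compact MG (qpD f).
Proof.
move=> surj hf F Fopen Fcover.
pose S c := hR RG c /\ exists2 U, F U & forall Q, qpD c Q -> U Q.
have [n [_ [a [[l [Sl ->]] ann_a fn]]]] : exists n, ideal_plus (ideal_span S) (ann M) (f ^+ n).
  apply: rad_span_of_qpD_cover surj _ hf _ => [c [] // | Q DQ].
  have [U [FU UQ]] := Fcover Q DQ; have [c [hc Dc DcU]] := qpD_base (Fopen U FU) UQ.
  by exists c => //; split => //; exists U.
have [s [sl ls]] := In_choice (P := fun q U => F U /\ forall Q, qpD q.2 Q -> U Q)
  (fun q lq => let: conj _ (ex_intro2 U FU DU) := Sl q lq in ex_intro _ U (conj FU DU)).
exists s; split; first by move=> U /sl [q _ []].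
move=> Q [qQ nrf]; apply: contrapT => uncovered.
have [rad0 radD radM] := rad_ideal (colon_ideal (qpSpec_submodule qQ)).
apply: nrf; apply: (@rad_exp _ _ _ n); rewrite fn; apply: (radD).
  apply: big_In_ind rad0 radD _ => q /ls [U sU [_ DU]]; apply: radM.
  by apply: contrapT => nr; apply: uncovered; exists U; split => //; apply: DU.
by exists 1%N; rewrite expr1 => m; rewrite ann_a; case: (qpSpec_submodule qQ).
Qed.

Lemma quasi_compact_bigcup {I : Type} (xs : seq I) (B : I -> (M -> Prop) -> Prop)
    (A : (M -> Prop) -> Prop) :
  (forall x, List.In x xs -> quasi_compact MG (B x)) ->
  (forall Q, A Q <-> exists2 x, List.In x xs & B x Q) -> quasi_compact MG A.
Proof.
move=> qcB AB F Fopen Fcover.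
have [ss [ssx xss]] := In_choice (P := fun x s =>
    (forall U, List.In U s -> F U) /\ forall Q, B x Q -> exists U, List.In U s /\ U Q)
  (fun x xx => qcB x xx F Fopen (fun Q BQ => Fcover Q ((AB Q).2 (ex_intro2 _ _ x xx BQ)))).
exists (flatten ss); split.
  by move=> U /List.in_concat [s [/ssx [x _ [sF _]] sU]]; apply: sF.
move=> Q /AB [x /xss [s sss [_ sQ]] BQ]; have [U [sU UQ]] := sQ Q BQ.
by exists U; split => //; apply/List.in_concat; exists s.
Qed.

Lemma open_quasi_compact_qpD_union U : qz_open MG U -> quasi_compact MG U ->
  exists fs : seq R, (forall f, List.In f fs -> hR RG f) /\
    forall Q, U Q <-> exists2 f, List.In f fs & qpD f Q.
Proof.
move=> oU qU.
pose F B := exists f, [/\ hR RG f, B = qpD f & forall Q, qpD f Q -> U Q].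
have [s [sF cover]] : exists s, (forall B, List.In B s -> F B) /\
    forall Q, U Q -> exists B, List.In B s /\ B Q.
  apply: qU => [B [f [hf -> _]] | Q UQ]; first exact: qpD_open.
  by have [f [hf Df DfU]] := qpD_base oU UQ; exists (qpD f); split => //; exists f.
have [fs [fsB Bfs]] := In_choice sF.
exists fs; split; first by move=> f /fsB [B _ []].
move=> Q; split=> [/cover [B [sB BQ]]|[f /fsB [B _ [_ _ DU]]]]; last exact: DU.
by have [f fsf [_ eB _]] := Bfs B sB; exists f => //; rewrite -eB.
Qed.

End GradedModule.

Unset Implicit Arguments.

Theorem theorem3p17 (G : group_str) (R : comNzRingType) (RG : graded_ring G R)
    (M : lmodType R) (MG : graded_module RG M) :
  psi_q_surjective MG ->
  (forall U V, qz_open MG U -> quasi_compact MG U ->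
               qz_open MG V -> quasi_compact MG V ->
     qz_open MG (fun Q => U Q /\ V Q) /\
     quasi_compact MG (fun Q => U Q /\ V Q)) /\
  (forall U, qz_open MG U -> forall Q, U Q ->
     exists B, [/\ qz_open MG B, quasi_compact MG B, B Q &
                   forall Q', B Q' -> U Q']).
Proof.
move=> surj; split; last first.
  move=> U oU Q UQ; have [f [hf Df DfU]] := qpD_base oU UQ.
  by exists (qpD MG f); split => //; [exact: qpD_open | exact: qpD_quasi_compact].
move=> U V oU qU oV qV; split; first exact: qz_open_setI.
have [fs [hfs Ufs]] := open_quasi_compact_qpD_union oU qU.
have [gs [hgs Vgs]] := open_quasi_compact_qpD_union oV qV.
have DfV f : List.In f fs -> quasi_compact MG (fun Q => qpD MG f Q /\ V Q).
  move=> fsf; apply: (quasi_compact_bigcup (xs := gs) (B := fun g => qpD MG (f * g))).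
    by move=> g gsg; apply: qpD_quasi_compact => //; apply: hR_mul; [apply: hfs | apply: hgs].
  move=> Q; rewrite Vgs; split=> [[Df [g gsg Dg]]|[g gsg]].
    by exists g => //; apply/qpD_mul; [apply: hfs | apply: hgs |].
  by move/qpD_mul => [||Df Dg]; [apply: hfs | apply: hgs | split => //; exists g].
apply: (quasi_compact_bigcup DfV) => Q; rewrite Ufs.
by split=> [[[f fsf Df] VQ]|[f fsf [Df VQ]]]; [exists f | split => //; exists f].
Qed.
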